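(* Let $f_{r,k}(x)=x^2\exp(r-x)+k$. For any $0\leq k<2$ there exists $r^*(k)$ such that for all $r\geq r^*(k)$ the map $f_{r,k}$ has an unstable fixed point $x_f>2$, i.e. $f_{r,k}(x_f)=x_f$ and $|f_{r,k}'(x_f)|>1$. *)

From Stdlib Require Import Reals.
Open Scope R_scope.

Definition f_rk (r k : R) (x : R) : R := x ^ 2 * exp (r - x) + k.

(** [f_{r,k}] lies above the diagonal at [x = 4] as soon as
    [r >= 4], and below it at [x = 2r + 4] because [exp] outgrows the square,
    so the intermediate value theorem gives a fixed point [x >= 4].  At a fixed
    point [x^2 exp(r - x) = x - k], hence [f'(x) = (2 - x)(x - k) / x], whose
    modulus exceeds [1] for [x >= 4] and [k < 2]. *)
From Stdlib Require Import Reals Lra Psatz.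
From Coquelicot Require Import Coquelicot.
Open Scope R_scope.

(* Square [1 + y/2 < exp (y/2)]; the slack is [(y/2 - 3)^2 >= 0]. *)
Lemma exp_gt_linear (y : R) : 0 < y -> 4 * y - 8 < exp y.
Proof.
  intro Hy.
  assert (Hhalf : 1 + y / 2 < exp (y / 2)) by (apply exp_ineq1; lra).
  assert (Hsq : exp y = exp (y / 2) * exp (y / 2)).
  { rewrite <- exp_plus; f_equal; field. }
  rewrite Hsq; set (e := exp (y / 2)) in *.
  assert (0 < (e - (1 + y / 2)) * (e + (1 + y / 2))) by (apply Rmult_lt_0_compat; lra).
  assert (0 <= (y / 2 - 3) * (y / 2 - 3)) by apply Rle_0_sqr.
  nra.
Qed.

Lemma fixed_point_of_crossing (f : R -> R) (a b : R) :
  continuity f -> a < b -> a < f a -> f b < b ->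
  exists x, a <= x <= b /\ f x = x.
Proof.
  intros Hf Hab Ha Hb.
  assert (Hg : continuity (fun x => x - f x)).
  { apply continuity_minus; [apply derivable_continuous, derivable_id | exact Hf]. }
  destruct (IVT (fun x => x - f x) a b Hg Hab ltac:(lra) ltac:(lra))
    as [x [Hx Hfx]].
  exists x; split; [exact Hx | lra].
Qed.

Lemma continuity_f_rk (r k : R) : continuity (f_rk r k).
Proof. unfold f_rk; reg. Qed.

Lemma f_rk_gt_id_at_4 (r k : R) : 4 <= r -> 0 <= k -> 4 < f_rk r k 4.
Proof.
  intros Hr Hk; unfold f_rk.
  assert (1 <= exp (r - 4)).
  { rewrite <- exp_0; destruct (Rle_lt_or_eq_dec 0 (r - 4)) as [Hlt | <-];
      [lra | left; apply exp_increasing; exact Hlt | lra]. }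
  nra.
Qed.

Lemma f_rk_lt_id_at_2r4 (r k : R) : 0 <= r -> k < 2 -> f_rk r k (2 * r + 4) < 2 * r + 4.
Proof.
  intros Hr Hk; unfold f_rk.
  set (X := 2 * r + 4).
  assert (HE : exp (r - X) = / exp (r + 4)).
  { rewrite <- exp_Ropp; f_equal; unfold X; lra. }
  assert (Hgrow : 2 * X < exp (r + 4)).
  { pose proof (exp_gt_linear (r + 4) ltac:(lra)); unfold X; lra. }
  assert (Hpos : 0 < exp (r + 4)) by apply exp_pos.
  assert (Hhalf : X ^ 2 * / exp (r + 4) < X / 2).
  { apply (Rmult_lt_reg_r (exp (r + 4))); [exact Hpos |].
    rewrite Rmult_assoc, Rinv_l by lra.
    assert (0 < X) by (unfold X; lra).
    nra. }
  rewrite HE; unfold X in *; lra.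
Qed.

Lemma derivable_pt_lim_f_rk (r k x : R) :
  derivable_pt_lim (f_rk r k) x ((2 - x) * x * exp (r - x)).
Proof.
  apply is_derive_Reals; unfold f_rk.
  auto_derive; [exact I | unfold Rminus; ring].
Qed.

Lemma f_rk_slope_at_fixed_point (r k x : R) :
  f_rk r k x = x -> (2 - x) * x * exp (r - x) * x = (2 - x) * (x - k).
Proof. unfold f_rk; intro Hfix; nra. Qed.

(* Since [x - k > x - 2 > 0], [(x - 2)(x - k) > (x - 2)^2 >= x] once [x >= 4]. *)
Lemma f_rk_unstable_fixed_point (r k x : R) :
  k < 2 -> 4 <= x -> f_rk r k x = x -> 1 < Rabs ((2 - x) * x * exp (r - x)).
Proof.
  intros Hk Hx Hfix.
  pose proof (f_rk_slope_at_fixed_point r k x Hfix) as Hslope.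
  assert (HE : 0 < exp (r - x)) by apply exp_pos.
  assert (Hneg : (2 - x) * x * exp (r - x) < 0).
  { assert (0 < (x - 2) * x * exp (r - x)) by (apply Rmult_lt_0_compat; nra).
    nra. }
  rewrite Rabs_left by exact Hneg.
  nra.
Qed.

Theorem lemma3p4 :
  forall k : R, 0 <= k < 2 ->
  exists rstar : R, forall r : R, rstar <= r ->
    exists xf : R, 2 < xf /\ f_rk r k xf = xf /\
      exists d : R, derivable_pt_lim (f_rk r k) xf d /\ 1 < Rabs d.
Proof.
  intros k [Hk0 Hk2]; exists 4; intros r Hr.
  destruct (fixed_point_of_crossing (f_rk r k) 4 (2 * r + 4)
              (continuity_f_rk r k) ltac:(lra) (f_rk_gt_id_at_4 r k Hr Hk0)
              (f_rk_lt_id_at_2r4 r k ltac:(lra) Hk2))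
    as [x [[Hx4 _] Hfix]].
  exists x; split; [lra | split; [exact Hfix |]].
  exists ((2 - x) * x * exp (r - x)); split.
  - apply derivable_pt_lim_f_rk.
  - exact (f_rk_unstable_fixed_point r k x Hk2 Hx4 Hfix).
Qed.
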